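(* Every conditional antimatroid is dismantlable, and every ample class of VC-dimension at most $2$ is dismantlable.
   Context: $X$ is a finite set and a concept class is $C\subseteq 2^X$. $Y$ is shattered by $C$ if $\{c\cap Y:c\in C\}=2^Y$; VC-dimension is the maximum size of a shattered set. A cube of $2^X$ is $\{T\cup Z:Z\subseteq Y\}$ with $Y\subseteq X$, $T\subseteq X\setminus Y$ ($Y$ its support); $C$ is ample if every set shattered by $C$ is the support of a cube contained in $C$. $C$ is dismantlable if it admits an ordering $c_1,\dots,c_m$ of all its concepts such that every level set $\{c_1,\dots,c_i\}$ is ample (equivalently, each $c_i$ is a corner of $\{c_1,\dots,c_i\}$, i.e. lies in exactly one inclusion-maximal cube contained in it). A conditional antimatroid is a class $C$ with $\varnothing\in C$, closed under intersection, such that every $c\in C$ is the smallest member of $C$ containing $\mathrm{ex}(c)$, where $\mathrm{ex}(c)=\{x\in c: c\setminus\{x\}\in C\}$ is the set of extremal points of $c$. *)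

(* The finite ground set X is a finType T; concepts are
   {set T}; a concept class is C : {set {set T}}. *)
From mathcomp Require Import all_boot.
Set Implicit Arguments. Unset Strict Implicit. Unset Printing Implicit Defensive.

Section Defs.
Variable T : finType.

Definition shatters (C : {set {set T}}) (Y : {set T}) : bool :=
  [set c :&: Y | c in C] == powerset Y.

Definition vc_dim (C : {set {set T}}) : nat :=
  \max_(Y : {set T} | shatters C Y) #|Y|.

Definition cube (Y T0 : {set T}) : {set {set T}} :=
  [set T0 :|: Z | Z in powerset Y].

Definition ample (C : {set {set T}}) : Prop :=
  forall Y : {set T}, shatters C Y ->
    exists T0 : {set T}, T0 \subset ~: Y /\ cube Y T0 \subset C.

Definition dismantlable (C : {set {set T}}) : Prop :=
  exists s : seq {set T},
    [/\ uniq s, (forall c, (c \in s) = (c \in C)) &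
        forall i, 0 < i <= size s -> ample [set c in take i s]].

Definition ex_pts (C : {set {set T}}) (c : {set T}) : {set T} :=
  [set x in c | (c :\ x) \in C].

Definition cond_antimatroid (C : {set {set T}}) : Prop :=
  [/\ set0 \in C,
      (forall c d, c \in C -> d \in C -> c :&: d \in C) &
      forall c, c \in C ->
        ex_pts C c \subset c /\
        forall d, d \in C -> ex_pts C c \subset d -> c \subset d].
End Defs.

(* Both statements are proved by removing one concept at a time while keeping the class
   ample.  In a conditional antimatroid a concept of maximum size can be removed without
   leaving the class of conditional antimatroids (unless it was the last concept), and
   conditional antimatroids are ample: the smallest concept c containing a shattered set
   Y has exactly Y as its set of extremal points, so closure under intersection puts the
   whole cube {c \ Z : Z ⊆ Y} in the class.
   From an ample class one may remove any corner c, i.e. any concept such that the cube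
   spanned at c by all its neighbours lies in the class.  For VC-dimension at most 2 we
   show, by induction on |C|, that every proper ample subclass N of VC-dimension at most
   1 misses a corner of C.  Either a halfspace {c in C | (x in c) = v} provides one by
   induction, with N replaced by its trace on the halfspace or by the carrier of x
   (which has VC-dimension at most 1), or N is a tree with a leaf l, only adjacent to
   its x-flip, which is then a corner of C; removing l from both C and N and using
   induction again gives a corner of C outside N. *)

From mathcomp Require Import all_boot.
Set Implicit Arguments. Unset Strict Implicit. Unset Printing Implicit Defensive.

Section Dismantling.
Variable T : finType.
Implicit Types (C D N : {set {set T}}) (A B P V W Y Z b c d e f l : {set T}) (x y : T).

(** * Symmetric differences, shattering and cubes *)

Definition symdiff A B := [set x | (x \in A) (+) (x \in B)].

Lemma in_symdiff x A B : (x \in symdiff A B) = (x \in A) (+) (x \in B).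
Proof. by rewrite inE. Qed.

Lemma in_symdiff1 x y A : (x \in symdiff A [set y]) = (x \in A) (+) (x == y).
Proof. by rewrite in_symdiff inE. Qed.

Lemma symdiffC A B : symdiff A B = symdiff B A.
Proof. by apply/setP=> x; rewrite !in_symdiff addbC. Qed.

Lemma symdiffA A B W : symdiff (symdiff A B) W = symdiff A (symdiff B W).
Proof. by apply/setP=> x; rewrite !in_symdiff addbA. Qed.

Lemma symdiff0 A : symdiff A set0 = A.
Proof. by apply/setP=> x; rewrite in_symdiff inE addbF. Qed.

Lemma symdiffv A : symdiff A A = set0.
Proof. by apply/setP=> x; rewrite in_symdiff inE addbb. Qed.

Lemma symdiffK A B : symdiff (symdiff A B) B = A.
Proof. by rewrite symdiffA symdiffv symdiff0. Qed.

Lemma symdiffKl A B : symdiff A (symdiff A B) = B.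
Proof. by rewrite -symdiffA symdiffv symdiffC symdiff0. Qed.

Lemma symdiff_eq0 A B : (symdiff A B == set0) = (A == B).
Proof.
apply/eqP/eqP=> [AB0|->]; last exact: symdiffv.
by rewrite -(symdiffK A B) AB0 symdiffC symdiff0.
Qed.

Lemma symdiff1_neq A y : symdiff A [set y] != A.
Proof. by apply/eqP=> /setP/(_ y); rewrite in_symdiff1 eqxx; case: (y \in A). Qed.

Lemma symdiff_subset A B Y : A \subset Y -> B \subset Y -> symdiff A B \subset Y.
Proof.
move=> /subsetP AY /subsetP BY; apply/subsetP=> x; rewrite in_symdiff.
by case: (boolP (x \in A)) => [/AY | _ /BY].
Qed.

Lemma shattersP C Y :
  reflect (forall P, P \subset Y -> exists2 c, c \in C & c :&: Y = P) (shatters C Y).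
Proof.
apply: (iffP eqP) => [CY P PY | CY].
  have : P \in powerset Y by rewrite powersetE.
  by rewrite -CY => /imsetP [c cC ->]; exists c.
apply/setP=> P; rewrite powersetE; apply/imsetP/idP => [[c _ ->]|/CY [c cC <-]].
  exact: subsetIr.
by exists c.
Qed.

Lemma shatters_subset C D Y : C \subset D -> shatters C Y -> shatters D Y.
Proof.
by move=> /subsetP CD /shattersP CY; apply/shattersP=> P /CY [c /CD]; exists c.
Qed.

Lemma shatters_set0 C c : c \in C -> shatters C set0.
Proof. by move=> cC; apply/shattersP=> P; rewrite subset0 => /eqP->; exists c; rewrite ?setI0. Qed.

Lemma shatters_set1 b Y : shatters [set b] Y -> Y = set0.
Proof.
move=> /shattersP bY; apply/eqP; apply: contraT => /set0Pn [y yY].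
have [_ /set1P -> /setP/(_ y)] := bY set0 (sub0set _).
have [_ /set1P -> /setP/(_ y)] := bY [set y] (etrans (sub1set _ _) yY).
by rewrite !inE eqxx yY andbT => ->.
Qed.

Lemma vc_dim_leP C k : reflect (forall Y, shatters C Y -> #|Y| <= k) (vc_dim C <= k).
Proof. exact: bigmax_leqP. Qed.

Lemma vc_dim_subset C D : C \subset D -> vc_dim C <= vc_dim D.
Proof.
move=> CD; apply/vc_dim_leP=> Y /(shatters_subset CD) DY.
exact: (leq_bigmax_cond (P := shatters D)).
Qed.

(* The cube with support Y through its vertex b; indexing it by symmetric differences
   lets any vertex serve as base point (the base of [cube Y T0] is its bottom vertex). *)
Definition cube_in C b Y := forall W, W \subset Y -> symdiff b W \in C.

Lemma cube_in_setU C b Y P : cube_in C b Y -> P \subset Y -> (b :\: Y) :|: P \in C.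
Proof.
move=> bY PY; suff -> : (b :\: Y) :|: P = symdiff b (symdiff (b :&: Y) P).
  by apply: bY; apply: symdiff_subset; rewrite ?subsetIr.
apply/setP=> x; rewrite !(inE, in_symdiff).
case: (boolP (x \in Y)) => xY; last by rewrite (contraNF (subsetP PY x) xY); case: (x \in b).
by case: (x \in b); case: (x \in P).
Qed.

Lemma ampleP C : ample C <-> forall Y, shatters C Y -> exists b, cube_in C b Y.
Proof.
split=> aC Y /aC.
  move=> [T0 [T0Y /subsetP YT0C]]; exists T0 => W WY; apply: YT0C.
  apply/imsetP; exists W; first by rewrite powersetE.
  apply/setP=> x; rewrite !(inE, in_symdiff).
  have [xW | _] := boolP (x \in W); last by rewrite orbF addbF.
  by have := subsetP T0Y x; rewrite inE (subsetP WY x xW); case: (x \in T0) => [/(_ isT)|].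
move=> [b bY]; exists (b :\: Y); split; first by rewrite setDE subsetIr.
by apply/subsetP=> c /imsetP [P]; rewrite powersetE => PY ->; apply: cube_in_setU.
Qed.

Lemma cube_in_shatters C b Y : cube_in C b Y -> shatters C Y.
Proof.
move=> bY; apply/shattersP=> P PY; exists ((b :\: Y) :|: P); first exact: cube_in_setU.
by rewrite setIUl setIDAC setDIl setDv setI0 set0U; apply/setIidPl.
Qed.

Lemma cube_in_support_subset C b Y Z : cube_in C b Y -> Z \subset Y -> cube_in C b Z.
Proof. by move=> bY ZY W WZ; apply: bY; apply: subset_trans ZY. Qed.

Lemma cube_in_shift C b Y W : cube_in C b Y -> W \subset Y -> cube_in C (symdiff b W) Y.
Proof. by move=> bY WY V VY; rewrite symdiffA; apply: bY; apply: symdiff_subset. Qed.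

Lemma cube_in_class_subset C D b Y : C \subset D -> cube_in C b Y -> cube_in D b Y.
Proof. by move=> /subsetP CD bY W /bY /CD. Qed.

Lemma cube_in0 C b : b \in C -> cube_in C b set0.
Proof. by move=> bC W; rewrite subset0 => /eqP ->; rewrite symdiff0. Qed.

Lemma shatters_class0 Y : shatters (set0 : {set {set T}}) Y = false.
Proof. by apply/negbTE/negP=> /shattersP/(_ set0 (sub0set _)) [c]; rewrite inE. Qed.

Lemma ample_class0 : ample (set0 : {set {set T}}).
Proof. by move=> Y; rewrite shatters_class0. Qed.

Lemma vc_dim_class0 : vc_dim (set0 : {set {set T}}) = 0.
Proof. by apply/eqP; rewrite -leqn0; apply/vc_dim_leP=> Y; rewrite shatters_class0. Qed.

Lemma ample_set1 b : ample [set b].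
Proof. by apply/ampleP=> Y /shatters_set1 ->; exists b; apply/cube_in0/set11. Qed.

Lemma vc_dim_set1 b : vc_dim [set b] = 0.
Proof. by apply/eqP; rewrite -leqn0; apply/vc_dim_leP=> Y /shatters_set1 ->; rewrite cards0. Qed.

(** * Halfspaces, carriers and intervals *)

Definition halfspace C x (v : bool) := [set c in C | (x \in c) == v].

Lemma in_halfspace C x v c : (c \in halfspace C x v) = (c \in C) && ((x \in c) == v).
Proof. by rewrite inE. Qed.

Lemma halfspace_sub C x v : halfspace C x v \subset C.
Proof. by apply/subsetP=> c; rewrite in_halfspace => /andP []. Qed.

Lemma shatters_halfspace C x v Y : shatters (halfspace C x v) Y -> x \notin Y.
Proof.
move=> /shattersP HY; apply/negP=> xY.
have PY : (if v then set0 else [set x]) \subset Y by case: (v); rewrite ?sub0set ?sub1set.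
have [c] := HY _ PY.
rewrite in_halfspace => /andP [_ /eqP xc] /setP/(_ x).
by rewrite !inE xY xc; case: (v); rewrite ?inE ?eqxx.
Qed.

Lemma shatters_setU1 C x Y :
  (forall v, shatters (halfspace C x v) Y) -> shatters C (x |: Y).
Proof.
move=> HY; apply/shattersP=> P PxY.
have PY : P :\ x \subset Y by rewrite subDset.
have [c] := shattersP _ _ (HY (x \in P)) _ PY.
rewrite in_halfspace => /andP [cC /eqP xc] cY; exists c => //.
apply/setP=> z; rewrite !inE; have [-> | zx] := eqVneq z x; first by rewrite xc andbT.
by move/setP: cY => /(_ z); rewrite !inE zx.
Qed.

Lemma cube_in_halfspace C x v b Y :
  x \notin Y -> (x \in b) = v -> cube_in C b Y -> cube_in (halfspace C x v) b Y.
Proof.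
move=> xY xb bY W WY; rewrite in_halfspace bY // in_symdiff xb.
by rewrite (contraNF (subsetP WY x) xY) addbF eqxx.
Qed.

Lemma cube_in_align C x v b Y :
  cube_in C b (x |: Y) -> exists2 b', cube_in C b' (x |: Y) & (x \in b') = v.
Proof.
move=> bxY; have [xb | xb] := eqVneq (x \in b) v; first by exists b.
exists (symdiff b [set x]); first exact: cube_in_shift bxY (subsetUl _ _).
by rewrite in_symdiff1 eqxx; move: xb; case: (x \in b); case: (v).
Qed.

Lemma halfspace_ample C x v : ample C -> ample (halfspace C x v).
Proof.
move=> /ampleP aC; apply/ampleP=> Y HY; have xY := shatters_halfspace HY.
have [b bY] := aC Y (shatters_subset (halfspace_sub C x v) HY).
have [xb | xb] := eqVneq (x \in b) v; first by exists b; apply: cube_in_halfspace.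
have HnY : shatters (halfspace C x (~~ v)) Y.
  by apply: cube_in_shatters (cube_in_halfspace xY _ bY); move: xb; case: (x \in b); case: (v).
have [b0 b0xY] : exists b0, cube_in C b0 (x |: Y).
  apply: aC; apply: shatters_setU1 => w; have [-> // | wv] := eqVneq w v.
  by have -> : w = ~~ v by move: wv; case: w; case: (v).
have [b' b'xY xb'] := cube_in_align v b0xY.
by exists b'; apply: cube_in_halfspace xY xb' (cube_in_support_subset b'xY (subsetUr _ _)).
Qed.

Definition carrier C x v := [set c in halfspace C x v | symdiff c [set x] \in C].

Lemma in_carrier C x v c :
  (c \in carrier C x v) = (c \in halfspace C x v) && (symdiff c [set x] \in C).
Proof. by rewrite [in LHS]inE. Qed.

Lemma carrier_sub C x v : carrier C x v \subset halfspace C x v.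
Proof. by apply/subsetP=> c; rewrite in_carrier => /andP []. Qed.

Lemma carrier_shatters C x v Y :
  shatters (carrier C x v) Y -> x \notin Y /\ shatters C (x |: Y).
Proof.
move=> MY; have HY := shatters_subset (carrier_sub C x v) MY.
have xY := shatters_halfspace HY; split=> //.
apply: shatters_setU1 => w; have [<- // | vw] := eqVneq v w.
apply/shattersP=> P /(shattersP _ _ MY) [c].
rewrite in_carrier in_halfspace => /andP [/andP [_ /eqP xc] cxC] cY.
exists (symdiff c [set x]).
  by rewrite in_halfspace cxC in_symdiff1 eqxx xc; move: vw; case: (v); case: w.
rewrite -cY; apply/setP=> z; rewrite !inE.
by have [-> | _] := eqVneq z x; rewrite ?(negPf xY) ?andbF ?addbF.
Qed.

Lemma carrier_ample C x v : ample C -> ample (carrier C x v).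
Proof.
move=> /ampleP aC; apply/ampleP=> Y /carrier_shatters [xY /aC [b0 b0xY]].
have [b bxY xb] := cube_in_align v b0xY.
exists b => W WY; have WxY : W \subset x |: Y := subset_trans WY (subsetUr _ _).
rewrite in_carrier (cube_in_halfspace xY xb (cube_in_support_subset bxY (subsetUr _ _))) //=.
by rewrite symdiffA; apply: bxY; apply: symdiff_subset WxY (subsetUl _ _).
Qed.

Lemma vc_dim_carrier C x v k : vc_dim C <= k.+1 -> vc_dim (carrier C x v) <= k.
Proof.
move=> /vc_dim_leP vC; apply/vc_dim_leP=> Y /carrier_shatters [xY /vC].
by rewrite cardsU1 xY.
Qed.

Definition interval C b W := [set c in C | symdiff b c \subset W].

Lemma in_interval C b W c : (c \in interval C b W) = (c \in C) && (symdiff b c \subset W).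
Proof. by rewrite inE. Qed.

Lemma interval_setU1 C b W x :
  x \notin W -> interval C b W = halfspace (interval C b (x |: W)) x (x \in b).
Proof.
move=> xW; apply/setP=> c; rewrite in_halfspace !in_interval -andbA; congr (_ && _).
have -> : ((x \in c) == (x \in b)) = (x \notin symdiff b c).
  by rewrite in_symdiff; case: (x \in b); case: (x \in c).
apply/idP/andP => [bcW | [/subsetP bcxW xbc]].
  by split; [apply: subset_trans bcW (subsetUr _ _) | exact: contra (subsetP bcW x) xW].
apply/subsetP=> z zbc; have := bcxW z zbc; rewrite !inE.
by have [zx | //] := eqVneq z x; rewrite -zx zbc in xbc.
Qed.

Lemma interval_ample C b W : ample C -> ample (interval C b W).
Proof.
move=> aC; have [n] := ubnP #|~: W|; elim: n W => // n IH W.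
have [WT _ | [x]] := set_0Vmem (~: W).
  suff -> : interval C b W = C by [].
  by apply/setP=> c; rewrite in_interval -[W]setCK WT setC0 subsetT andbT.
rewrite inE ltnS => xW cardW; rewrite (interval_setU1 _ _ xW).
apply/halfspace_ample/IH/leq_trans/cardW/proper_card.
by rewrite properC properUr // sub1set.
Qed.

Lemma ample_pair c d : ample [set c; d] -> c != d -> exists y, d = symdiff c [set y].
Proof.
move=> /ampleP acd cd.
have [y ycd] : exists y, y \in symdiff c d by apply/set0Pn; rewrite symdiff_eq0.
have cdy : shatters [set c; d] [set y].
  rewrite -[[set y]]setU0; apply: shatters_setU1 => w.
  have [ycw | ycw] := eqVneq (y \in c) w.
    by apply: (@shatters_set0 _ c); rewrite in_halfspace set21 ycw eqxx.
  apply: (@shatters_set0 _ d); rewrite in_halfspace set22 /=.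
  by move: ycd ycw; rewrite in_symdiff; case: (y \in c); case: (y \in d); case: w.
have [b by1] := acd _ cdy.
have := symdiff1_neq b y; have := by1 _ (subxx [set y]); have := by1 set0 (sub0set _).
rewrite symdiff0 !in_set2 => /orP [] /eqP -> /orP [] /eqP bE; rewrite bE ?eqxx // => _.
all: by exists y; rewrite -bE ?symdiffK.
Qed.

Lemma ample_neighbour_toward C c d : ample C -> c \in C -> d \in C -> c != d ->
  exists2 y, y \in symdiff c d & symdiff c [set y] \in C.
Proof.
move=> aC cC dC cd.
(* A concept d' closest to c in the interval between c and d spans with c an interval
   {c, d'}; being ample, this pair is an edge. *)
pose F := [set e in C | (e != c) && (symdiff c e \subset symdiff c d)].
have dF : d \in F by rewrite inE dC eq_sym cd subxx.
have [d' d'F d'min] := arg_minnP (fun e => #|symdiff c e|) dF.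
have : d' \in F := d'F; rewrite inE => /and3P [d'C d'c d'd].
have I_cd' : interval C c (symdiff c d') = [set c; d'].
  apply/setP=> e; rewrite in_interval in_set2.
  apply/andP/orP => [[eC ed'] | [/eqP-> | /eqP->]]; last 2 first.
  - by rewrite cC symdiffv sub0set.
  - by rewrite d'C subxx.
  have [-> | ec] := eqVneq e c; [by left | right].
  have eF : e \in F by rewrite inE eC ec (subset_trans ed' d'd).
  apply/eqP; apply: (can_inj (symdiffKl c)); apply/eqP.
  by rewrite eqEcard ed' d'min.
have acd' : ample [set c; d'] by rewrite -I_cd'; apply: interval_ample.
have [y d'E] : exists y, d' = symdiff c [set y] by apply: ample_pair; rewrite 1?eq_sym.
exists y; last by rewrite -d'E.
by apply: (subsetP d'd); rewrite d'E symdiffKl set11.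
Qed.

(** * Corners *)

Definition neighbours C c := [set y | symdiff c [set y] \in C].

(* Equivalent to the paper's notion: the cube spanned at c by all its neighbours is then
   the unique maximal cube of C containing c. *)
Definition corner C c := c \in C /\ cube_in C c (neighbours C c).

Lemma corner_ample C c : ample C -> corner C c -> ample (C :\ c).
Proof.
move=> aC [cC cN]; apply/ampleP => Y Y_sh.
have [b bY] := (ampleP C).1 aC Y (shatters_subset (subsetDl C [set c]) Y_sh).
have [bcY | bcY] := boolP (symdiff b c \subset Y); last first.
  exists b => W WY; rewrite in_setD1 bY // andbT.
  by apply: contraNneq bcY => <-; rewrite symdiffKl.
have cY : cube_in C c Y by rewrite -(symdiffKl b c); apply: cube_in_shift.
have YN : Y \subset neighbours C c.
  by apply/subsetP=> y yY; rewrite inE; apply: cY; rewrite sub1set.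
have [s sN sY] : exists2 s, s \in neighbours C c & s \notin Y.
  apply/subsetPn/negP => NY.
  have [d] := shattersP _ _ Y_sh (c :&: Y) (subsetIr _ _).
  rewrite in_setD1 => /andP [dc dC] dY; have cd : c != d by rewrite eq_sym.
  have [y ycd ycC] := ample_neighbour_toward aC cC dC cd.
  have yY : y \in Y by apply: (subsetP NY); rewrite inE.
  move/setP: dY => /(_ y); rewrite !inE yY !andbT => dcy.
  by rewrite in_symdiff dcy addbb in ycd.
exists (symdiff c [set s]) => W WY.
rewrite in_setD1 symdiffA cN ?andbT; last first.
  by apply: symdiff_subset; rewrite ?sub1set // (subset_trans WY YN).
apply/eqP; rewrite -{2}(symdiff0 c) => /(can_inj (symdiffKl c))/setP/(_ s).
by rewrite in_symdiff in_set1 eqxx inE (contraNF (subsetP WY s) sY).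
Qed.

Lemma corner_neighbours_le1 C c : c \in C -> #|neighbours C c| <= 1 -> corner C c.
Proof.
move=> cC N1; split=> // W WN; case: (set_0Vmem W) => [-> | [y yW]]; first by rewrite symdiff0.
have -> : W = [set y].
  by apply/eqP; rewrite eq_sym eqEcard sub1set yW cards1 (leq_trans (subset_leq_card WN)).
by have := subsetP WN y yW; rewrite inE.
Qed.

Lemma corner_setD1 C c l : corner (C :\ l) c -> #|symdiff c l| != 1 -> corner C c.
Proof.
move=> [/setD1P [_ cC] cN] cl1; split=> //.
apply: cube_in_class_subset (subsetDl C [set l]) (cube_in_support_subset cN _).
apply/subsetP=> y; rewrite !inE => ycC; rewrite ycC andbT.
by apply: contraNneq cl1 => <-; rewrite symdiffKl cards1.
Qed.

Lemma neighbours_halfspace C x v c y : c \in halfspace C x v -> y != x ->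
  (y \in neighbours (halfspace C x v) c) = (y \in neighbours C c).
Proof.
rewrite in_halfspace => /andP [_ xc] yx.
by rewrite !inE [x == y]eq_sym (negPf yx) addbF xc andbT.
Qed.

Lemma corner_halfspace_out C x v c :
  corner (halfspace C x v) c -> symdiff c [set x] \notin C -> corner C c.
Proof.
move=> [cH cN] cxC; split; first exact: subsetP (halfspace_sub C x v) c cH.
apply: cube_in_class_subset (halfspace_sub C x v) (cube_in_support_subset cN _).
apply/subsetP=> y yN; rewrite neighbours_halfspace //.
by apply: contraNneq cxC => <-; rewrite inE in yN.
Qed.

Lemma corner_halfspace_in C x v c :
  corner (halfspace C x v) c -> halfspace C x v \subset carrier C x v -> corner C c.
Proof.
move=> [cH cN] HM; split; first exact: subsetP (halfspace_sub C x v) c cH.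
move=> W WN; have cWxH : symdiff c (W :\ x) \in halfspace C x v.
  apply: cN; apply/subsetP=> y /setD1P [yx yW].
  by rewrite neighbours_halfspace // (subsetP WN).
have [xW | xW] := boolP (x \in W).
  have := subsetP HM _ cWxH; rewrite in_carrier symdiffA => /andP [_].
  suff -> : symdiff (W :\ x) [set x] = W by [].
  by apply/setP=> z; rewrite !inE; case: (eqVneq z x) => [-> | _] /=; rewrite ?xW ?addbF.
suff WxW : W :\ x = W by rewrite -WxW (subsetP (halfspace_sub C x v)).
by apply/setP=> z; rewrite !inE; case: (eqVneq z x) => [-> | _] /=; rewrite ?(negPf xW).
Qed.

Lemma halfspace_leaf N l x : ample N -> l \in N -> neighbours N l \subset [set x] ->
  halfspace N x (x \in l) = [set l].
Proof.
move=> aN lN lNx; apply/eqP; rewrite eq_sym eqEsubset sub1set in_halfspace lN eqxx /=.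
apply/subsetP=> f fH; rewrite inE; apply: contraT => fl.
have lH : l \in halfspace N x (x \in l) by rewrite in_halfspace lN eqxx.
have lf : l != f by rewrite eq_sym.
have aNx : ample (halfspace N x (x \in l)) := halfspace_ample aN.
have [y _] := ample_neighbour_toward aNx lH fH lf.
rewrite in_halfspace => /andP [lyN]; have := subsetP lNx y; rewrite !inE lyN => /(_ isT)/eqP->.
by rewrite eqxx; case: (x \in l).
Qed.

Lemma corner_neighbours_single N l v : ample N -> vc_dim N <= 1 -> corner N l ->
  v \in N -> l != v -> exists x, neighbours N l = [set x].
Proof.
move=> aN vcN [lN lN_cube] vN lv.
have [x _ lxN] := ample_neighbour_toward aN lN vN lv.
exists x; apply/eqP; rewrite eq_sym eqEcard sub1set inE lxN cards1.
exact: (elimT (vc_dim_leP _ _) vcN) _ (cube_in_shatters lN_cube).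
Qed.

(** * Corners of ample classes of VC-dimension at most 2 *)

(* One induction step of [ample_vc2_corner_outside]; [IHn] is its induction hypothesis. *)
Section CornerOutside.

Variable n : nat.
Hypothesis IHn : forall C N, #|C| < n -> ample C -> vc_dim C <= 2 ->
  ample N -> vc_dim N <= 1 -> N \subset C -> ~~ (C \subset N) ->
  exists2 c, corner C c & c \notin N.

Variables C N : {set {set T}}.
Hypotheses (cardC : #|C| < n.+1) (aC : ample C) (vcC : vc_dim C <= 2).
Hypotheses (aN : ample N) (vcN : vc_dim N <= 1) (NC : N \subset C).

Lemma card_proper_lt D : D \proper C -> #|D| < n.
Proof. by move/proper_card/leq_trans; apply. Qed.

Lemma vc_dim_le2 D : D \subset C -> vc_dim D <= 2.
Proof. by move/vc_dim_subset/leq_trans; apply. Qed.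

Lemma corner_outside_halfspace x v :
    ~~ (C \subset halfspace C x v) -> ~~ (halfspace C x v \subset N) ->
    (forall f, f \in N -> f \in halfspace C x v -> symdiff f [set x] \in C) ->
  exists2 c, corner C c & c \notin N.
Proof.
move=> CH HN NH_flip; have HC := halfspace_sub C x v.
have cardH : #|halfspace C x v| < n by apply: card_proper_lt; rewrite properE HC.
have aH : ample (halfspace C x v) := halfspace_ample aC.
have [HM | HM] := boolP (halfspace C x v \subset carrier C x v).
  have NHH : halfspace N x v \subset halfspace C x v.
    by apply/subsetP=> f; rewrite !in_halfspace => /andP [/(subsetP NC) -> ->].
  have HNH : ~~ (halfspace C x v \subset halfspace N x v).
    by apply: contra HN => /subset_trans; apply; apply: halfspace_sub.
  have vcNH := leq_trans (vc_dim_subset (halfspace_sub N x v)) vcN.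
  have [c cH cNH] := IHn cardH aH (vc_dim_le2 HC) (halfspace_ample aN) vcNH NHH HNH.
  exists c; first exact: corner_halfspace_in cH HM.
  by apply: contra cNH => cN; move: cH.1; rewrite !in_halfspace cN => /andP [].
have [c cH cM] : exists2 c, corner (halfspace C x v) c & c \notin carrier C x v.
  apply: IHn => //; [exact: vc_dim_le2 | exact: carrier_ample |
    exact: vc_dim_carrier | exact: carrier_sub].
exists c; last by apply: contra cM => cN; rewrite in_carrier cH.1 NH_flip // cH.1.
by apply: (corner_halfspace_out cH); apply: contra cM => cxC; rewrite in_carrier cH.1.
Qed.

Lemma corner_outside_singleton e f : e \in C -> e \notin N -> f \in C -> f != e ->
  N \subset [set f] -> exists2 c, corner C c & c \notin N.
Proof.
move=> eC eN fC fe Nf.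
have [x xef] : exists x, x \in symdiff e f by apply/set0Pn; rewrite symdiff_eq0 eq_sym.
have xf : (x \in f) = ~~ (x \in e).
  by move: xef; rewrite in_symdiff; case: (x \in e); case: (x \in f).
apply: (@corner_outside_halfspace x (x \in e)).
- by apply/subsetPn; exists f; rewrite // in_halfspace fC xf; case: (x \in e).
- by apply/subsetPn; exists e; rewrite // in_halfspace eC eqxx.
- move=> g /(subsetP Nf)/set1P ->.
  by rewrite in_halfspace xf; case: (x \in e); rewrite andbF.
Qed.

Lemma corner_outside_leaf e l x : e \in C -> e \notin N -> corner N l ->
    symdiff l [set x] \in N -> halfspace N x (x \in l) = [set l] ->
    halfspace C x (x \in l) \subset N ->
  exists2 c, corner C c & c \notin N.
Proof.
move=> eC eN lc lxN NH_l HN; have [lN _] := lc; have lC := subsetP NC l lN.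
have lCx : neighbours C l \subset [set x].
  apply/subsetP=> y lyC; rewrite inE in lyC; rewrite inE; apply: contraT => yx.
  have lyH : symdiff l [set y] \in halfspace C x (x \in l).
    by rewrite in_halfspace lyC in_symdiff1 [x == y]eq_sym (negPf yx) addbF eqxx.
  have : symdiff l [set y] \in halfspace N x (x \in l).
    by rewrite in_halfspace (subsetP HN _ lyH); move: lyH; rewrite in_halfspace => /andP [].
  by rewrite NH_l inE (negPf (symdiff1_neq l y)).
have lcC : corner C l.
  by apply: corner_neighbours_le1 lC _; rewrite (leq_trans (subset_leq_card lCx)) ?cards1.
have el : e != l by apply: contraNneq eN => ->.
(* A corner of C :\ l outside N is not adjacent to l, whose only neighbour lies in N,
   hence is a corner of C. *)
have [c cc cNl] : exists2 c, corner (C :\ l) c & c \notin N :\ l.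
  apply: IHn.
  - by move: cardC; rewrite (cardsD1 l C) lC add1n ltnS.
  - exact: corner_ample.
  - exact: vc_dim_le2 (subsetDl _ _).
  - exact: corner_ample.
  - exact: leq_trans (vc_dim_subset (subsetDl _ _)) vcN.
  - exact: setSD.
  - by apply/subsetPn; exists e; rewrite !in_setD1 ?el ?eC // negb_and eN orbT.
have [cl cC] : c != l /\ c \in C by apply/setD1P; case: cc.
have cN : c \notin N by apply: contra cNl => cN; rewrite in_setD1 cl.
exists c => //; apply: corner_setD1 cc _; apply/negP => /cards1P [y cly].
have c_ly : c = symdiff l [set y] by rewrite -cly symdiffC symdiffK.
have : y \in neighbours C l by rewrite inE -c_ly.
by move/(subsetP lCx)/set1P => yx; move: cN; rewrite c_ly yx lxN.
Qed.

Lemma corner_outside_nonsingleton e v :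
    e \in C -> e \notin N -> v \in N -> ~~ (N \subset [set v]) ->
  exists2 c, corner C c & c \notin N.
Proof.
move=> eC eN vN Nv.
have NpC : N \proper C by rewrite properE NC; apply/subsetPn; exists e.
have [l lc] : exists2 l, corner N l & l \notin [set v].
  apply: IHn (card_proper_lt NpC) aN (leq_trans vcN _) (@ample_set1 v) _ _ Nv => //.
  - by rewrite vc_dim_set1.
  - by rewrite sub1set.
rewrite inE => lv; have [lN _] := lc.
have [x lNx] := corner_neighbours_single aN vcN lc vN lv.
have lxN : symdiff l [set x] \in N by move/setP/(_ x): lNx; rewrite !inE eqxx.
have NH_l : halfspace N x (x \in l) = [set l] by apply: halfspace_leaf; rewrite ?lNx.
have [HN | HN] := boolP (halfspace C x (x \in l) \subset N).
  exact: corner_outside_leaf eC eN lc lxN NH_l HN.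
apply: (@corner_outside_halfspace x (x \in l)) => //.
- apply/subsetPn; exists (symdiff l [set x]); first exact: subsetP NC _ lxN.
  by rewrite in_halfspace in_symdiff1 eqxx; case: (x \in l); rewrite andbF.
- move=> f fN fH; have : f \in halfspace N x (x \in l).
    by rewrite in_halfspace fN; move: fH; rewrite in_halfspace => /andP [].
  by rewrite NH_l => /set1P ->; apply: (subsetP NC).
Qed.

Lemma corner_outside_step : ~~ (C \subset N) -> exists2 c, corner C c & c \notin N.
Proof.
move=> CN; have [e eC eN] := subsetPn CN.
have [N0 | [v vN]] := set_0Vmem N.
  have [Ce | /subsetPn [f fC]] := boolP (C \subset [set e]); last first.
    rewrite inE => fe; apply: corner_outside_singleton eC eN fC fe _.
    by rewrite N0 sub0set.
  exists e; last by rewrite N0 inE.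
  apply: corner_neighbours_le1 eC _.
  rewrite (_ : neighbours C e = set0) ?cards0 //; apply/setP=> y; rewrite !inE.
  by apply/negP=> /(subsetP Ce)/set1P/eqP; rewrite (negPf (symdiff1_neq e y)).
have [Nv | Nv] := boolP (N \subset [set v]); last exact: corner_outside_nonsingleton eC eN vN Nv.
have ve : v != e by apply: contraNneq eN => <-.
exact: corner_outside_singleton eC eN (subsetP NC v vN) ve Nv.
Qed.

End CornerOutside.

Lemma ample_vc2_corner_outside C N :
    ample C -> vc_dim C <= 2 -> ample N -> vc_dim N <= 1 -> N \subset C ->
  ~~ (C \subset N) -> exists2 c, corner C c & c \notin N.
Proof.
have [n] := ubnP #|C|; elim: n C N => // n IHn C N cardC.
move=> aC vcC aN vcN NC; exact: (corner_outside_step IHn cardC aC vcC aN vcN NC).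
Qed.

Lemma ample_vc2_corner C : ample C -> vc_dim C <= 2 -> C != set0 -> exists c, corner C c.
Proof.
move=> aC vcC C0; have [c cc _] : exists2 c, corner C c & c \notin set0.
  apply: ample_vc2_corner_outside => //; first exact: ample_class0.
  - by rewrite vc_dim_class0.
  - exact: sub0set.
  - by rewrite subset0.
by exists c.
Qed.

(** * Dismantlability *)

Lemma dismantlable_setD1 C c : c \in C -> ample C -> dismantlable (C :\ c) -> dismantlable C.
Proof.
move=> cC aC [s [us sC sa]]; exists (rcons s c); split.
- by rewrite rcons_uniq us sC !inE eqxx.
- by move=> d; rewrite mem_rcons inE sC in_setD1; case: eqVneq => [-> | ].
move=> i; rewrite size_rcons => /andP [i0]; rewrite leq_eqVlt ltnS => /orP [/eqP -> | ilt].
  suff -> : [set d in take (size s).+1 (rcons s c)] = C by [].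
  apply/setP=> d; rewrite -(size_rcons s c) take_size inE mem_rcons inE sC in_setD1.
  by case: eqVneq => [-> | ].
by rewrite -cats1 takel_cat //; apply: sa; rewrite i0.
Qed.

Lemma dismantlable_ind (P : {set {set T}} -> Prop) :
    (forall C, P C -> C != set0 -> ample C /\ exists2 c, c \in C & P (C :\ c)) ->
  forall C, P C -> dismantlable C.
Proof.
move=> Pstep C; have [n] := ubnP #|C|; elim: n C => // n IHn C cardC PC.
have [-> | C0] := eqVneq C set0.
  by exists [::]; split=> // [c | []]; rewrite ?inE.
have [aC [c cC Pc]] := Pstep C PC C0.
have cardCc : #|C :\ c| < n by move: cardC; rewrite (cardsD1 c C) cC add1n ltnS.
exact: dismantlable_setD1 cC aC (IHn _ cardCc Pc).
Qed.

(** * Conditional antimatroids *)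

Definition cap_closed C := forall d e, d \in C -> e \in C -> d :&: e \in C.

Lemma cap_closed_setD C c Z : cap_closed C ->
  c \in C -> Z \subset ex_pts C c -> c :\: Z \in C.
Proof.
move=> CI cC; have [n] := ubnP #|Z|; elim: n Z => // n IHn Z.
have [-> _ _ | [x xZ]] := set_0Vmem Z; first by rewrite setD0.
rewrite (cardsD1 x Z) xZ add1n ltnS => cardZ /subsetP Zex.
rewrite -(setD1K xZ) setDUr CI //; first by have := Zex x xZ; rewrite inE => /andP [].
by apply: IHn cardZ _; apply/subsetP=> z /setD1P [_ /Zex].
Qed.

Lemma cap_closed_hull C Y d : cap_closed C -> d \in C -> Y \subset d ->
  exists2 c, c \in C & Y \subset c /\ forall e, e \in C -> Y \subset e -> c \subset e.
Proof.
move=> CI dC Yd; pose F := [set e in C | Y \subset e].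
have dF : d \in F by rewrite inE dC Yd.
have [c cF cmin] := arg_minnP (fun e => #|e|) dF.
have : c \in F := cF; rewrite inE => /andP [cC Yc]; exists c => //; split=> // e eC Ye.
have ceF : c :&: e \in F by rewrite inE CI // subsetI Yc Ye.
suff <- : c :&: e = c by apply: subsetIr.
by apply/eqP; rewrite eqEcard subsetIl cmin.
Qed.

Lemma ex_pts_hull C Y c : cond_antimatroid C -> shatters C Y -> c \in C -> Y \subset c ->
  (forall d, d \in C -> Y \subset d -> c \subset d) -> ex_pts C c = Y.
Proof.
move=> [_ CI Cex] Y_sh cC Yc cmin; have [exc cgen] := Cex c cC.
have exY : ex_pts C c \subset Y.
  apply/subsetP=> x; rewrite inE => /andP [xc cxC]; apply: contraT => xY.
  suff : c \subset c :\ x by move/subsetP/(_ x xc); rewrite !inE eqxx.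
  apply: cmin cxC _; apply/subsetP=> y yY; rewrite !inE (subsetP Yc y yY) andbT.
  by apply: contraNneq xY => <-.
apply/eqP; rewrite eqEsubset exY; apply/subsetP=> y yY; apply: contraT => yex.
have [d dC dY] := shattersP _ _ Y_sh (Y :\ y) (subsetDl _ _).
have exd : ex_pts C c \subset d.
  apply/subsetP=> x xex; have : x \in Y :\ y.
    by rewrite !inE (subsetP exY x xex) andbT; apply: contraNneq yex => <-.
  by rewrite -dY inE => /andP [].
have exdc : ex_pts C c \subset d :&: c by rewrite subsetI exd exc.
have /setIP [yd _] := subsetP (cgen _ (CI _ _ dC cC) exdc) y (subsetP Yc y yY).
by move/setP: dY => /(_ y); rewrite !inE yd yY eqxx.
Qed.

Lemma cond_antimatroid_ample C : cond_antimatroid C -> ample C.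
Proof.
move=> caC; have [_ CI _] := caC; apply/ampleP=> Y Y_sh.
have [d dC dY] := shattersP _ _ Y_sh Y (subxx Y).
have Yd : Y \subset d by rewrite -dY subsetIl.
have [c cC [Yc cmin]] := cap_closed_hull CI dC Yd.
have exY := ex_pts_hull caC Y_sh cC Yc cmin.
exists (c :\: Y) => W WY.
suff -> : symdiff (c :\: Y) W = c :\: (Y :\: W).
  by apply: cap_closed_setD; rewrite // exY subsetDl.
apply/setP=> z; rewrite !inE; case: (boolP (z \in W)) => [zW | _]; last by rewrite addbF.
by have zY := subsetP WY z zW; rewrite zY (subsetP Yc z zY).
Qed.

Lemma cond_antimatroid_setD1 C c : cond_antimatroid C -> c \in C -> c != set0 ->
  (forall d, d \in C -> #|d| <= #|c|) -> cond_antimatroid (C :\ c).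
Proof.
move=> [C0 CI Cex] cC c0 cmax.
have exD d : d \in C -> ex_pts (C :\ c) d = ex_pts C d.
  move=> dC; apply/setP=> x; rewrite !inE; case: (boolP (x \in d)) => //= xd.
  suff -> : d :\ x != c by [].
  apply/eqP=> dxc; have := cmax d dC.
  by rewrite (cardsD1 x d) xd -dxc add1n ltnn.
split.
- by rewrite in_setD1 eq_sym c0 C0.
- move=> d e /setD1P [dc dC] /setD1P [ec eC]; rewrite in_setD1 CI // andbT.
  apply: contra dc => /eqP dec; rewrite eq_sym eqEcard cmax // andbT.
  by rewrite -dec subsetIl.
- move=> d /setD1P [_ dC]; rewrite exD //; have [exd dgen] := Cex d dC.
  by split=> // e /setD1P [_ eC]; apply: dgen.
Qed.

Lemma cond_antimatroid_peel C : cond_antimatroid C ->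
  exists2 c, c \in C & C :\ c = set0 \/ cond_antimatroid (C :\ c).
Proof.
move=> caC; have [C0 _ _] := caC.
have [c cC cmax] := arg_maxnP (fun d : {set T} => #|d|) C0.
exists c => //; have [c0 | c0] := eqVneq c set0; last first.
  by right; apply: cond_antimatroid_setD1.
left; apply/setP=> d; rewrite in_setD1 inE; apply/negP=> /andP [dc dC].
by move: (cmax d dC) => /=; rewrite c0 cards0 leqn0 cards_eq0 -c0 (negPf dc).
Qed.

End Dismantling.

Theorem proposition4p7 (T : finType) :
  (forall C : {set {set T}}, cond_antimatroid C -> dismantlable C) /\
  (forall C : {set {set T}}, ample C -> vc_dim C <= 2 -> dismantlable C).
Proof.
split=> [C caC | C aC vcC].
  apply: (@dismantlable_ind _ (fun C => C = set0 \/ cond_antimatroid C)); last by right.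
  move=> D [-> | caD]; first by rewrite eqxx.
  by split; [exact: cond_antimatroid_ample | exact: cond_antimatroid_peel].
apply: (@dismantlable_ind _ (fun C => ample C /\ vc_dim C <= 2)) (conj aC vcC).
move=> D [aD vcD] D0; have [c [cD cc]] := ample_vc2_corner aD vcD D0.
split=> //; exists c => //; split; first exact: corner_ample.
exact: leq_trans (vc_dim_subset (subsetDl _ _)) vcD.
Qed.
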